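(* Let $(X,\mathfrak{M},m)$ be a $\sigma$-finite measure space and let $f:X\to[0,\infty)$ be a probability density function with respect to $m$. Then for every $\beta\ge 0$, $$P_f(\{x\in X: pv_f(x)\le \beta\})\le \beta \qquad\text{and}\qquad P_f(\{x\in X: pv_f(x)>\beta\})\ge 1-\beta .$$ Moreover, equality holds in both inequalities if and only if $\beta=\sup\{pv_f(x): x\in X,\ pv_f(x)\le\beta\}$ (with the convention $\sup\emptyset=0$).
   Context: $f$ is a measurable function $f:X\to[0,\infty)$ with $\int_X f\,dm=1$. For a measurable set $S\in\mathfrak{M}$, $P_f(S):=\int_S f\,dm$. The p-value of $x\in X$ with respect to $f$ is $$pv_f(x):=\int_{\{t\in X:\ f(t)\le f(x)\}} f\,dm = P_f(\{t: f(t)\le f(x)\})\in[0,1].$$ *)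

From HB Require Import structures.
From mathcomp Require Import all_boot all_order all_algebra.
From mathcomp Require Import all_classical all_reals all_analysis.
Set Implicit Arguments. Unset Strict Implicit. Unset Printing Implicit Defensive.
Import Order.TTheory GRing.Theory Num.Theory.
Local Open Scope classical_set_scope.
Local Open Scope ring_scope.

Definition Pf d (T : measurableType d) (R : realType)
  (mu : {measure set T -> \bar R}) (f : T -> R) (S : set T) : \bar R :=
  (\int[mu]_(x in S) (f x)%:E)%E.

(* pv_f(x) := P_f({t : f t <= f x}); this is in [0,1] for a density,
   so we take its real value with [fine]. *)
Definition pv d (T : measurableType d) (R : realType)
  (mu : {measure set T -> \bar R}) (f : T -> R) (x : T) : R :=
  fine (Pf mu f [set t | f t <= f x]).

From HB Require Import structures.
From mathcomp Require Import all_boot all_order all_algebra.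
From mathcomp Require Import all_classical all_reals all_analysis measurable_realfun.
From mathcomp Require Import lra.
Import Order.TTheory GRing.Theory Num.Theory.
Local Open Scope classical_set_scope.
Local Open Scope ring_scope.

(* The set A = {pv_f <= beta} is closed downwards for the preorder induced by
   f, so it is the increasing union of the sublevel sets {f <= f (y n)} along a
   sequence y in A whose f-values are cofinal in f(A).  Continuity of P_f from
   below then gives P_f(A) = sup {pv_f x | x in A} =: s.  Since s <= beta and
   P_f(~` A) = 1 - P_f(A), both inequalities follow, with equality iff
   s = beta. *)

Section cofinal_sequence.
Context {R : realType}.

Lemma cofinal_seq {E : set R} : E !=set0 ->
  exists v : R ^nat, (forall n, E (v n)) /\ (forall e, E e -> exists n, e <= v n).
Proof.
move=> [e0 Ee0].
have [[m [Em mmax]]|nomax] := pselect (exists m, E m /\ ubound E m).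
  by exists (fun=> m); split=> // e Ee; exists 0%N; exact: mmax.
have [[b bub]|unbounded] := pselect (has_ubound E).
  have supE : has_sup E by split; [exists e0 | exists b].
  have /choice[v hv] n : exists x, E x /\ sup E - n.+1%:R^-1 < x.
    have n1_gt0 : 0 < n.+1%:R^-1 :> R by rewrite invr_gt0 ltr0n.
    by have [x Ex ?] := sup_adherent n1_gt0 supE; exists x.
  exists v; split=> [n|e Ee]; first by case: (hv n).
  have e_lt_sup : e < sup E.
    rewrite lt_neqAle sup_upper_bound // andbT; apply/eqP => eE.
    by apply: nomax; exists e; split=> // x Ex; rewrite eE; exact: sup_upper_bound.
  have [k hk] := ltr_add_invr e_lt_sup.
  exists k; have [_ hvk] := hv k; move: hk hvk; set i := _^-1; lra.
have /choice[v hv] n : exists x, E x /\ n%:R < x.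
  apply: contrapT => nex; apply: unbounded; exists n%:R => x Ex.
  by rewrite leNgt; apply/negP => nx; apply: nex; exists x.
exists v; split=> [n|e Ee]; first by case: (hv n).
exists (Num.truncn e).+1; have [_ hv1] := hv (Num.truncn e).+1.
have := truncnS_gt e; lra.
Qed.

Lemma cofinal_nondecreasing_seq {E : set R} : E !=set0 ->
  exists u : R ^nat, [/\ forall n, E (u n), nondecreasing_seq u &
                          forall e, E e -> exists n, e <= u n].
Proof.
move=> /cofinal_seq[v [Ev vcof]].
pose fix u n := if n is k.+1 then Num.max (u k) (v k.+1) else v 0%N.
exists u; split.
- elim=> [|n IH] //=; case: (leP (u n) (v n.+1)) => _ //.
- by apply/nondecreasing_seqP => n /=; rewrite le_max lexx.
- move=> e /vcof[n en]; exists n; apply: (le_trans en).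
  by case: n {en} => [|n] //=; rewrite le_max lexx orbT.
Qed.

End cofinal_sequence.

Definition downward_closed {T : Type} {disp} {R : porderType disp} (f : T -> R)
    (A : set T) :=
  forall t x, A x -> (f t <= f x)%O -> A t.

Section density_measure.
Context d (T : measurableType d) (R : realType) (mu : {measure set T -> \bar R}).
Variables (f : T -> R) (mf : measurable_fun setT f) (f0 : forall x, 0 <= f x).

(* The side conditions are arguments, as for [induced_charge], so that the
   measure structure below can be keyed on [density_measure mf f0]. *)
Definition density_measure of measurable_fun setT f & (forall x, 0 <= f x) :=
  Pf mu f.

Local Notation nu := (density_measure mf f0).

Let nu0 : nu set0 = 0%E.
Proof. by rewrite /nu /density_measure /Pf integral_set0. Qed.

Let nu_ge0 A : (0 <= nu A)%E.
Proof. by apply: integral_ge0 => x _; rewrite lee_fin. Qed.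

Let nu_semi_sigma_additive : semi_sigma_additive nu.
Proof.
apply: semi_sigma_additive_nng_induced => [|x]; first exact/measurable_EFinP.
by rewrite lee_fin.
Qed.

HB.instance Definition _ :=
  isMeasure.Build _ _ _ nu nu0 nu_ge0 nu_semi_sigma_additive.

End density_measure.
Arguments density_measure {d T R} mu {f}.

Section probability_density.
Context {d} {T : measurableType d} {R : realType} {mu : {measure set T -> \bar R}}.
Context {f : T -> R} (mf : measurable_fun setT f) (f0 : forall x, 0 <= f x).
Hypothesis f1 : (\int[mu]_x (f x)%:E = 1)%E.

Local Notation nu := (density_measure mu mf f0).
Local Notation pv := (pv mu f).

Lemma Pf_le {S1 S2} : measurable S1 -> measurable S2 -> S1 `<=` S2 ->
  (Pf mu f S1 <= Pf mu f S2)%E.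
Proof.
by move=> mS1 mS2 S12; change (nu S1 <= nu S2)%E; apply: le_measure; rewrite ?inE.
Qed.

Lemma Pf_fin_num {S} : measurable S -> Pf mu f S \is a fin_num.
Proof.
move=> mS; rewrite ge0_fin_numE; last exact: (measure_ge0 nu).
by apply: (le_lt_trans (Pf_le mS measurableT (@subsetT _ S))); rewrite /Pf f1 ltry.
Qed.

Lemma Pf_setC {S} : measurable S -> Pf mu f (~` S) = (1 - Pf mu f S)%E.
Proof.
move=> mS; rewrite -f1 -(setUv S) /Pf ge0_integral_setU //.
- by rewrite addeAC subee ?add0e // -/(Pf mu f S) Pf_fin_num.
- exact: measurableC.
- by rewrite setUv; exact/measurable_EFinP.
- by move=> x _; rewrite lee_fin.
- by rewrite disj_set2E setICr.
Qed.

Lemma measurable_sublevel c : measurable [set t | f t <= c].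
Proof.
have := mf measurableT _ (measurable_itv `]-oo, c]); rewrite setTI.
by congr measurable; apply/seteqP; split => x /=; rewrite in_itv.
Qed.

Lemma pv_le t x : f t <= f x -> pv t <= pv x.
Proof.
move=> ftx; apply: fine_le; [exact/Pf_fin_num/measurable_sublevel..|].
apply: Pf_le; [exact: measurable_sublevel..|].
by move=> u /= fu; exact: le_trans ftx.
Qed.

Section downward_closed_set.
Context {A : set T} (Adown : downward_closed f A).

Lemma downward_closed_bigcup : A !=set0 ->
  exists y : T ^nat, [/\ forall n, A (y n),
    nondecreasing_seq (fun n => [set t | f t <= f (y n)]) &
    A = \bigcup_n [set t | f t <= f (y n)]].
Proof.
move=> A0; have fA0 : f @` A !=set0 by case: A0 => a Aa; exists (f a), a.
have [u [fAu u_nd ucof]] := cofinal_nondecreasing_seq fA0.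
have /choice[y hy] n : exists x, A x /\ f x = u n.
  by have [x Ax fxu] := fAu n; exists x.
have fyE n : f (y n) = u n by case: (hy n).
exists y; split=> [n|| ]; first by case: (hy n).
  apply/nondecreasing_seqP => n; apply/subsetPset => t /=.
  by rewrite !fyE => /le_trans; apply; exact: u_nd.
apply/seteqP; split=> [t At|t [n _ fty]].
  by have [n tn] := ucof _ (ex_intro2 _ _ t At erefl); exists n; rewrite //= fyE.
by apply: Adown fty; case: (hy n).
Qed.

Lemma measurable_downward_closed : measurable A.
Proof.
have [->|/set0P/downward_closed_bigcup[y [_ _ ->]]] := eqVneq A set0.
  exact: measurable0.
by apply: bigcupT_measurable => n; exact: measurable_sublevel.
Qed.

Lemma Pf_downward_closed : Pf mu f A = (sup [set pv x | x in A])%:E.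
Proof.
have [->|/set0P A0] := eqVneq A set0.
  by rewrite image_set0 sup0 /Pf integral_set0.
have mA := measurable_downward_closed.
have PA_fin := Pf_fin_num mA.
have pv_le_PA x : A x -> pv x <= fine (Pf mu f A).
  move=> Ax; apply: fine_le; [exact/Pf_fin_num/measurable_sublevel|by []|].
  by apply: Pf_le => [|//|t /= ftx]; [exact: measurable_sublevel|exact: Adown ftx].
have pvA0 : [set pv x | x in A] !=set0 by case: A0 => a Aa; exists (pv a), a.
have supA : has_sup [set pv x | x in A].
  by split=> //; exists (fine (Pf mu f A)) => _ [x Ax <-]; exact: pv_le_PA.
apply/le_anti/andP; split; last first.
  by rewrite -(fineK PA_fin) lee_fin; apply: ge_sup => // _ [x Ax <-]; exact: pv_le_PA.
have [y [Ay L_nd AE]] := downward_closed_bigcup A0.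
have mL n : measurable [set t | f t <= f (y n)] by exact: measurable_sublevel.
have mU : measurable (\bigcup_n [set t | f t <= f (y n)]) by rewrite -AE.
have nuA := nondecreasing_cvg_mu (mu := nu) mL mU L_nd.
rewrite -AE in nuA; change (Pf mu f A) with (nu A).
rewrite -(cvg_lim _ nuA) //; apply: lime_le; first by apply/cvg_ex; exists (nu A).
apply: nearW => n /=; rewrite /density_measure -(fineK (Pf_fin_num (mL n))) lee_fin.
by apply: sup_upper_bound => //; exists (y n).
Qed.

End downward_closed_set.
End probability_density.

Theorem lemma1 (d : measure_display) (T : measurableType d) (R : realType)
  (mu : {measure set T -> \bar R}) (f : T -> R)
  (hsf : sigma_finite setT mu)
  (hfm : measurable_fun setT f)
  (hf0 : forall x, 0 <= f x)
  (hf1 : (\int[mu]_x (f x)%:E = 1)%E)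
  (beta : R) (hbeta : 0 <= beta) :
  (Pf mu f [set x | (pv mu f x <= beta)%R] <= beta%:E)%E /\
  ((1 - beta)%:E <= Pf mu f [set x | (beta < pv mu f x)%R])%E /\
  ((Pf mu f [set x | (pv mu f x <= beta)%R] = beta%:E /\
    Pf mu f [set x | (beta < pv mu f x)%R] = (1 - beta)%:E) <->
   beta = sup [set pv mu f x | x in [set x | (pv mu f x <= beta)%R]]).
Proof.
set A := [set x | pv mu f x <= beta].
have Adown : downward_closed f A.
  by move=> t x; rewrite /A /= => Ax /(pv_le hfm hf0 hf1) /le_trans; apply.
have PA := Pf_downward_closed hfm hf0 hf1 Adown.
set s := sup _ in PA *.
have PAC : Pf mu f (~` A) = (1 - s)%:E.
  by rewrite (Pf_setC hfm hf0 hf1 (measurable_downward_closed hfm Adown)) PA.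
have AC : [set x | beta < pv mu f x] = ~` A.
  by apply/seteqP; split=> x /=; rewrite ltNge => /negP.
have s_le_beta : s <= beta.
  have [pvA0|pvA_empty] := pselect ([set pv mu f x | x in A] !=set0).
    by apply: ge_sup => // _ [x Ax <-].
  rewrite /s (_ : [set _ | _ in A] = set0) ?sup0 //.
  by rewrite -subset0 => r pvAr; apply: pvA_empty; exists r.
rewrite AC PA PAC !lee_fin; split=> //; split; first lra.
by split=> [[[->]]|<-].
Qed.
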